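(* For all integers $n\ge 2$ and $k\ge 1$, $b(n+1,k)\ge 2\,b(n,k)$.
   Context: A complete non-ambiguous matrix (CNM) of size $n$ is an $n\times n$ matrix $M=(m_{i,j})$ with entries in $\{0,1\}$ whose support $T=\{(i,j): m_{i,j}=1\}$ (whose elements are called vertices) satisfies: (1) $(1,1)\in T$; (2) for every $p=(i,j)\in T$ with $p\neq(1,1)$, exactly one of the following holds: there is $(i',j)\in T$ with $i'<i$, or there is $(i,j')\in T$ with $j'<j$; (3) every row and every column of $M$ contains at least one vertex; (4) define the parent of $p=(i,j)\neq(1,1)$ to be $(i',j)$ with $i'<i$ maximal if such a vertex exists, and otherwise $(i,j')$ with $j'<j$ maximal; then every vertex is the parent of either zero or exactly two vertices. A vertex with no children is a leaf. The leaf matrix $p(M)$ is obtained from $M$ by replacing all non-leaf vertices by $0$ (it is a permutation matrix). For $n\ge 1$ and $k\ge 0$, $b(n,k)$ denotes the number of permutations $\sigma\in S_n$ such that there are exactly $k$ CNMs $M$ of size $n$ whose leaf matrix $p(M)$ equals the permutation matrix of $\sigma$ (the matrix with $1$'s at positions $(i,\sigma(i))$). *)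

From mathcomp Require Import all_boot all_algebra all_fingroup.
Set Implicit Arguments. Unset Strict Implicit. Unset Printing Implicit Defensive.

(* Indices are 0-based ordinals: the paper's position (i,j) (1-based) is
   (i-1, j-1) here; in particular the paper's (1,1) is (0,0). *)
Section CNM.
Variable n : nat.
Implicit Type M : 'M[bool]_n.

Definition is_origin (i j : 'I_n) : bool := (val i == 0) && (val j == 0).

Definition has_above M (i j : 'I_n) : bool := [exists i' : 'I_n, (i' < i) && M i' j].
Definition has_left M (i j : 'I_n) : bool := [exists j' : 'I_n, (j' < j) && M i j'].

Definition is_parent M (p q : 'I_n * 'I_n) : bool :=
  let: (a, b) := p in let: (i, j) := q in
  [&& M a b, M i j, ~~ is_origin i j &
   if has_above M i j then
     [&& b == j, a < i & [forall i'' : 'I_n, ((a < i'') && (i'' < i)) ==> ~~ M i'' j]]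
   else
     [&& a == i, b < j & [forall j'' : 'I_n, ((b < j'') && (j'' < j)) ==> ~~ M i j'']]].

Definition nchildren M (p : 'I_n * 'I_n) : nat := #|[set q | is_parent M p q]|.

Definition is_CNM M : bool :=
  [&& [exists i : 'I_n, exists j : 'I_n, is_origin i j && M i j],
      [forall i : 'I_n, forall j : 'I_n,
                   (M i j && ~~ is_origin i j) ==> (has_above M i j (+) has_left M i j)],
      [forall i : 'I_n, exists j : 'I_n, M i j],
      [forall j : 'I_n, exists i : 'I_n, M i j] &
      [forall i : 'I_n, forall j : 'I_n,
                   M i j ==> ((nchildren M (i, j) == 0) || (nchildren M (i, j) == 2))]].

Definition leaf_matrix M : 'M[bool]_n :=
  \matrix_(i, j) (M i j && (nchildren M (i, j) == 0)).

Definition perm_bmx (s : 'S_n) : 'M[bool]_n := \matrix_(i, j) (s i == j).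

Definition num_CNM_with_leaves (s : 'S_n) : nat :=
  #|[set M : 'M[bool]_n | is_CNM M && (leaf_matrix M == perm_bmx s)]|.

End CNM.

Definition b (n k : nat) : nat := #|[set s : 'S_n | num_CNM_with_leaves s == k]|.

(* Let M be a CNM of size n whose leaf matrix is the permutation s.  A vertex
   of the last row has no child below it, so it is a leaf: the last row of M is
   the single vertex (n, s n).  Grafting two children onto it, one below in a
   new row n+1 and one to the right in a new column n+1, gives a CNM of size
   n+1 with leaf permutation s' = s except n |-> n+1, n+1 |-> s n, and every CNM
   with leaf permutation s' arises this way from a unique M.  Transposition
   exchanges s and s^-1, so also ((s^-1)')^-1 has as many CNMs as s.  The two
   permutations s' and ((s^-1)')^-1 send n+1 to s n and to n respectively; they
   differ, because s n = n would make (n, n) a vertex of M with nothing above or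
   to the left of it, impossible for n >= 2. *)

From mathcomp Require Import all_boot all_algebra all_fingroup.
Set Implicit Arguments. Unset Strict Implicit. Unset Printing Implicit Defensive.

Lemma card_set_pair n (P : pred ('I_n * 'I_n)) :
  #|[set q | P q]| = \sum_(a < n) \sum_(b < n) P (a, b).
Proof.
rewrite cardsE -sum1_card pair_big /= big_mkcond /=.
by apply: eq_bigr => -[a b] _; rewrite unfold_in /=; case: (P _).
Qed.

Section Vertices.
Variable n : nat.
Implicit Types M : 'M[bool]_n.

Definition axis_xor_at M i j :=
  (M i j && ~~ is_origin i j) ==> (has_above M i j (+) has_left M i j).

Definition axis_xor M := [forall i, forall j, axis_xor_at M i j].

Definition binary_at M i j :=
  M i j ==> ((nchildren M (i, j) == 0) || (nchildren M (i, j) == 2)).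

Definition binary M := [forall i, forall j, binary_at M i j].

Lemma CNM_axis_xor M : is_CNM M -> axis_xor M.
Proof. by case/and5P. Qed.

Lemma nchildrenE M p :
  nchildren M p = \sum_(a < n) \sum_(b < n) is_parent M p (a, b).
Proof. exact: card_set_pair. Qed.

Lemma is_parent_childF M p i j : ~~ M i j -> is_parent M p (i, j) = false.
Proof. by case: p => a b /negbTE; rewrite /is_parent => ->; rewrite andbF. Qed.

Lemma eq_child_axis M p q1 q2 : is_parent M p q1 -> is_parent M p q2 ->
  has_above M q1.1 q1.2 = has_above M q2.1 q2.2 -> q1 = q2.
Proof.
case: p q1 q2 => [a b] [i1 j1] [i2 j2] /=; rewrite /is_parent.
case/and4P => _ M1 _ C1; case/and4P => _ M2 _ C2 Eh; rewrite Eh in C1.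
case: (has_above M i2 j2) in C1 C2.
- case/and3P: C1 => /eqP e1 l1 /forallP F1; case/and3P: C2 => /eqP e2 l2 /forallP F2.
  subst; case: (ltngtP i1 i2) => h; last by congr pair; apply: val_inj.
  + by have := F2 i1; rewrite l1 h M1.
  + by have := F1 i2; rewrite l2 h M2.
- case/and3P: C1 => /eqP e1 l1 /forallP F1; case/and3P: C2 => /eqP e2 l2 /forallP F2.
  subst; case: (ltngtP j1 j2) => h; last by congr pair; apply: val_inj.
  + by have := F2 j1; rewrite l1 h M1.
  + by have := F1 j2; rewrite l2 h M2.
Qed.

Lemma nchildren2_below M p :
  nchildren M p = 2 -> exists q, is_parent M p q && has_above M q.1 q.2.
Proof.
move/eqP/cards2P => [q1 [q2 [neq12 E]]].
have P1 : is_parent M p q1 by have := set21 q1 q2; rewrite -E inE.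
have P2 : is_parent M p q2 by have := set22 q1 q2; rewrite -E inE.
case A1: (has_above M q1.1 q1.2); first by exists q1; rewrite P1 A1.
case A2: (has_above M q2.1 q2.2); first by exists q2; rewrite P2 A2.
by move: neq12; rewrite (eq_child_axis P1 P2) ?eqxx // A1 A2.
Qed.

End Vertices.

Section Transpose.
Variable n : nat.
Implicit Types M : 'M[bool]_n.

Lemma has_above_tr M i j : has_above (M^T)%R j i = has_left M i j.
Proof. by apply: eq_existsb => x; rewrite mxE. Qed.

Lemma has_left_tr M i j : has_left (M^T)%R j i = has_above M i j.
Proof. by apply: eq_existsb => x; rewrite mxE. Qed.

Lemma is_originC (i j : 'I_n) : is_origin j i = is_origin i j.
Proof. exact: andbC. Qed.

(* Condition (2) is needed: the parent rule prefers the column, so it is only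
   transpose-invariant when a vertex cannot look both ways. *)
Lemma is_parent_tr M a b i j : axis_xor M ->
  is_parent (M^T)%R (b, a) (j, i) = is_parent M (a, b) (i, j).
Proof.
move=> /forallP xorM; rewrite /is_parent !mxE has_above_tr is_originC.
case: (M a b) => //=; case Mij: (M i j) => //=; case O: (is_origin i j) => //=.
have := forallP (xorM i) j; rewrite /axis_xor_at Mij O /=.
have -> : [forall i'' : 'I_n, (b < i'') && (i'' < j) ==> ~~ (M^T)%R i'' i] =
          [forall j'' : 'I_n, (b < j'') && (j'' < j) ==> ~~ M i j''].
  by apply: eq_forallb => x; rewrite mxE.
have -> : [forall j'' : 'I_n, (a < j'') && (j'' < i) ==> ~~ (M^T)%R j j''] =
          [forall i'' : 'I_n, (a < i'') && (i'' < i) ==> ~~ M i'' j].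
  by apply: eq_forallb => x; rewrite mxE.
by case: (has_above M i j); case: (has_left M i j).
Qed.

Lemma nchildren_tr M i j : axis_xor M -> nchildren (M^T)%R (j, i) = nchildren M (i, j).
Proof.
move=> xorM; rewrite !nchildrenE exchange_big.
by apply: eq_bigr => a _; apply: eq_bigr => b _; rewrite is_parent_tr.
Qed.

Lemma is_CNM_tr M : is_CNM M -> is_CNM (M^T)%R.
Proof.
move=> CM; have xorM := CNM_axis_xor CM.
case/and5P: CM => C1 C2 C3 C4 C5; apply/and5P; split.
- case/existsP: C1 => i /existsP [j /andP[o Mij]]; apply/existsP; exists j.
  by apply/existsP; exists i; rewrite mxE is_originC o Mij.
- apply/forallP => j; apply/forallP => i.
  rewrite mxE has_above_tr has_left_tr is_originC addbC.
  exact: (forallP (forallP C2 i) j).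
- apply/forallP => j; case/existsP: (forallP C4 j) => i Mij.
  by apply/existsP; exists i; rewrite mxE.
- apply/forallP => j; case/existsP: (forallP C3 j) => i Mji.
  by apply/existsP; exists i; rewrite mxE.
- apply/forallP => j; apply/forallP => i; rewrite mxE nchildren_tr //.
  exact: (forallP (forallP C5 i) j).
Qed.

Lemma leaf_matrix_tr M : axis_xor M -> leaf_matrix (M^T)%R = ((leaf_matrix M)^T)%R.
Proof. by move=> xorM; apply/matrixP => i j; rewrite !mxE nchildren_tr. Qed.

Lemma perm_bmxV (s : 'S_n) : perm_bmx (s^-1)%g = ((perm_bmx s)^T)%R.
Proof.
apply/matrixP => i j; rewrite !mxE.
by apply/eqP/eqP => [<-|<-]; rewrite ?permKV ?permK.
Qed.

Lemma num_CNM_with_leavesV (s : 'S_n) :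
  num_CNM_with_leaves (s^-1)%g = num_CNM_with_leaves s.
Proof.
rewrite /num_CNM_with_leaves -[RHS](card_imset _ (@trmx_inj _ n n)).
congr #|pred_of_set _|.
apply/setP => N; rewrite inE; apply/idP/imsetP.
- case/andP => CN /eqP LN; exists (N^T)%R; last by rewrite trmxK.
  by rewrite inE is_CNM_tr // leaf_matrix_tr ?CNM_axis_xor // LN -perm_bmxV invgK eqxx.
- case=> M; rewrite inE => /andP [CM /eqP LM] ->.
  by rewrite is_CNM_tr // leaf_matrix_tr ?CNM_axis_xor // LM perm_bmxV eqxx.
Qed.

End Transpose.

Section LastLine.
Variable m : nat.
Implicit Types (M : 'M[bool]_m.+1) (s : 'S_m.+1).

(* A vertex of the last row has no child below it, hence no child at all. *)
Lemma CNM_last_row M s : is_CNM M -> leaf_matrix M = perm_bmx s ->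
  forall j, M ord_max j = (s ord_max == j).
Proof.
move=> CM /matrixP LM j; have := LM ord_max j; rewrite !mxE.
case Mj: (M ord_max j) => //= <-.
case/and5P: CM => _ _ _ _ /forallP /(_ ord_max) /forallP /(_ j).
rewrite Mj /= => /orP [// | /eqP /nchildren2_below [[a b] /andP [Pab A]]].
case/and4P: Pab => _ _ _; rewrite /= A => /and3P [_ lt_max _].
by rewrite ltnNge leq_ord in lt_max.
Qed.

Lemma CNM_last_col M s : is_CNM M -> leaf_matrix M = perm_bmx s ->
  forall i, M i ord_max = ((s^-1)%g ord_max == i).
Proof.
move=> CM LM i; have LMt : leaf_matrix (M^T)%R = perm_bmx (s^-1)%g.
  by rewrite leaf_matrix_tr ?CNM_axis_xor // LM perm_bmxV.
by have := CNM_last_row (is_CNM_tr CM) LMt i; rewrite mxE.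
Qed.

End LastLine.

(* For n >= 2 the corner (n,n) would be a vertex with nothing above or left. *)
Lemma CNM_perm_last_neq m (s : 'S_m.+2) :
  0 < num_CNM_with_leaves s -> s ord_max != ord_max.
Proof.
case/card_gt0P => M; rewrite inE => /andP [CM /eqP LM]; apply/eqP => s_max.
have sV_max : (s^-1)%g ord_max = ord_max by rewrite -{1}s_max permK.
have := forallP (forallP (CNM_axis_xor CM) ord_max) ord_max.
rewrite /axis_xor_at (CNM_last_row CM LM) s_max eqxx /=.
have -> : has_above M ord_max ord_max = false.
  apply/existsP => -[i /andP [lt_i]]; rewrite (CNM_last_col CM LM) sV_max.
  by move/eqP=> ei; rewrite -ei ltnn in lt_i.
have -> // : has_left M ord_max ord_max = false.
apply/existsP => -[j /andP [lt_j]]; rewrite (CNM_last_row CM LM) s_max.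
by move/eqP=> ej; rewrite -ej ltnn in lt_j.
Qed.

Section Graft.
Variable m : nat.
Local Notation emb := (@lift m.+2 ord_max).
Local Notation last1 := (@ord_max m).
Local Notation last2 := (@ord_max m.+1).

Lemma ltn_emb2 (i j : 'I_m.+1) : (emb i < emb j) = (i < j).
Proof. by rewrite !lift_max. Qed.

Lemma emb_lt_last (i : 'I_m.+1) : emb i < last2.
Proof. by rewrite lift_max /= ltn_ord. Qed.

Lemma last_lt_embF (i : 'I_m.+1) : (last2 < emb i) = false.
Proof. by rewrite lift_max /= ltnNge (ltnW (ltn_ord i)). Qed.

Lemma last_ltF (i : 'I_m.+1) : (last1 < i) = false.
Proof. by rewrite ltnNge leq_ord. Qed.

Lemma eq_emb2 (i j : 'I_m.+1) : (emb i == emb j) = (i == j).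
Proof. exact: (inj_eq lift_inj). Qed.

Lemma emb_eq_lastF (i : 'I_m.+1) : (emb i == last2) = false.
Proof. by apply/negbTE; rewrite eq_sym neq_lift. Qed.

Lemma last_eq_embF (i : 'I_m.+1) : (last2 == emb i) = false.
Proof. by apply/negbTE; rewrite neq_lift. Qed.

Lemma is_origin_emb (i j : 'I_m.+1) : is_origin (emb i) (emb j) = is_origin i j.
Proof. by have val_emb k : val (emb k) = val k := lift_max k; rewrite /is_origin !val_emb. Qed.

Lemma is_origin_lastl (i : 'I_m.+2) : is_origin last2 i = false.
Proof. by []. Qed.

Lemma is_origin_lastr (i : 'I_m.+2) : is_origin i last2 = false.
Proof. by rewrite /is_origin andbF. Qed.

Lemma forall_ord_lift (P : pred 'I_m.+2) :
  [forall x, P x] = [forall i, P (emb i)] && P last2.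
Proof.
apply/forallP/andP => [PT | [/forallP Pemb Plast] x].
  by split; [apply/forallP => i |]; apply: PT.
by case: (unliftP last2 x) => [i ->|->].
Qed.

Lemma exists_ord_lift (P : pred 'I_m.+2) :
  [exists x, P x] = [exists i, P (emb i)] || P last2.
Proof.
apply/existsP/orP => [[x]|[/existsP [i Pi]|Plast]]; last 2 first.
- by exists (emb i).
- by exists last2.
by case: (unliftP last2 x) => [i ->|->] Px; [left; apply/existsP; exists i | right].
Qed.

Lemma sum_ord_lift (F : 'I_m.+2 -> nat) :
  \sum_(x < m.+2) F x = \sum_(i < m.+1) F (emb i) + F last2.
Proof.
rewrite big_ord_recr; congr (_ + _); apply: eq_bigr => i _; congr F.
by apply: val_inj; exact: (esym (lift_max i)).
Qed.

Lemma sum_pred1_and (y : 'I_m.+1) (b : bool) : \sum_(x < m.+1) ((x == y) && b : nat) = b.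
Proof. by rewrite (bigD1 y) //= eqxx big1 ?addn0 // => x /negbTE ->. Qed.

(* [graft c A] hangs two children below and to the right of the vertex
   [(last1, c)] of [A], in a new last row and a new last column. *)
Definition graft (c : 'I_m.+1) (A : 'M[bool]_m.+1) : 'M[bool]_m.+2 :=
  \matrix_(x, y)
  match unlift last2 x, unlift last2 y with
  | Some i, Some j => A i j
  | Some i, None => i == last1
  | None, Some j => j == c
  | None, None => false
  end.

Definition ungraft (N : 'M[bool]_m.+2) : 'M[bool]_m.+1 := \matrix_(i, j) N (emb i) (emb j).

Section Entries.
Variables (c : 'I_m.+1) (A : 'M[bool]_m.+1).

Lemma graft_emb i j : graft c A (emb i) (emb j) = A i j.
Proof. by rewrite mxE !liftK. Qed.

Lemma graft_emb_last i : graft c A (emb i) last2 = (i == last1).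
Proof. by rewrite mxE liftK unlift_none. Qed.

Lemma graft_last_emb j : graft c A last2 (emb j) = (j == c).
Proof. by rewrite mxE liftK unlift_none. Qed.

Lemma graft_last_last : graft c A last2 last2 = false.
Proof. by rewrite mxE unlift_none. Qed.

Lemma graftK : ungraft (graft c A) = A.
Proof. by apply/matrixP => i j; rewrite mxE graft_emb. Qed.

End Entries.

Lemma graft_inj c : injective (graft c).
Proof. exact: can_inj (graftK c). Qed.

Lemma ungraftK c (N : 'M[bool]_m.+2) :
  (forall y, N last2 y = (emb c == y)) -> (forall x, N x last2 = (emb last1 == x)) ->
  graft c (ungraft N) = N.
Proof.
move=> Nlast_row Nlast_col; apply/matrixP => x y.
case: (unliftP last2 x) => [i ->|->]; case: (unliftP last2 y) => [j ->|->].
- by rewrite graft_emb mxE.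
- by rewrite graft_emb_last Nlast_col eq_emb2 eq_sym.
- by rewrite graft_last_emb Nlast_row eq_emb2 eq_sym.
- by rewrite graft_last_last Nlast_row emb_eq_lastF.
Qed.

Section GraftVertex.
Variables (c : 'I_m.+1) (M : 'M[bool]_m.+1).
Local Notation N := (graft c M).

Lemma has_above_graft i j : has_above N (emb i) (emb j) = has_above M i j.
Proof.
rewrite /has_above exists_ord_lift last_lt_embF orbF.
by apply: eq_existsb => x; rewrite ltn_emb2 graft_emb.
Qed.

Lemma has_left_graft i j : has_left N (emb i) (emb j) = has_left M i j.
Proof.
rewrite /has_left exists_ord_lift last_lt_embF orbF.
by apply: eq_existsb => x; rewrite ltn_emb2 graft_emb.
Qed.

Lemma is_parent_graft a b i j :
  is_parent N (emb a, emb b) (emb i, emb j) = is_parent M (a, b) (i, j).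
Proof.
rewrite /is_parent has_above_graft.
have -> : [forall x : 'I_m.+2, ((emb a < x) && (x < emb i)) ==> ~~ N x (emb j)]
        = [forall x : 'I_m.+1, ((a < x) && (x < i)) ==> ~~ M x j].
  rewrite forall_ord_lift last_lt_embF andbF andbT.
  by apply: eq_forallb => x; rewrite !ltn_emb2 graft_emb.
have -> : [forall y : 'I_m.+2, ((emb b < y) && (y < emb j)) ==> ~~ N (emb i) y]
        = [forall y : 'I_m.+1, ((b < y) && (y < j)) ==> ~~ M i y].
  rewrite forall_ord_lift last_lt_embF andbF andbT.
  by apply: eq_forallb => y; rewrite !ltn_emb2 graft_emb.
by rewrite !graft_emb is_origin_emb !eq_emb2 !ltn_emb2.
Qed.

Lemma has_left_graft_belowF : has_left N last2 (emb c) = false.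
Proof.
rewrite /has_left exists_ord_lift last_lt_embF orbF; apply/existsP => -[y].
by rewrite ltn_emb2 graft_last_emb => /andP [lt_yc /eqP eq_yc]; rewrite eq_yc ltnn in lt_yc.
Qed.

Lemma has_above_graft_rightF : has_above N (emb last1) last2 = false.
Proof.
rewrite /has_above exists_ord_lift last_lt_embF orbF; apply/existsP => -[x].
by rewrite ltn_emb2 graft_emb_last => /andP [lt_x /eqP eq_x]; rewrite eq_x ltnn in lt_x.
Qed.

Lemma nchildren_graft_below : nchildren N (last2, emb c) = 0.
Proof.
rewrite nchildrenE big1 // => x _; rewrite big1 // => y _.
apply/eqP; rewrite eqb0; apply/negP; rewrite /is_parent.
case/and4P => _ Nxy _; case: (unliftP last2 x) Nxy => [i ->|->] Nxy.
- by case: ifP => _ /and3P []; rewrite ?last_lt_embF ?last_eq_embF.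
- case: ifP => _ /and3P []; first by rewrite ltnn.
  case: (unliftP last2 y) Nxy => [j ->|->]; last by rewrite graft_last_last.
  by rewrite graft_last_emb => /eqP -> _; rewrite ltnn.
Qed.

Lemma nchildren_graft_right : nchildren N (emb last1, last2) = 0.
Proof.
rewrite nchildrenE big1 // => x _; rewrite big1 // => y _.
apply/eqP; rewrite eqb0; apply/negP; rewrite /is_parent.
case/and4P => _ Nxy _; case: ifP => _ /and3P []; last by rewrite ltnNge leq_ord.
move=> /eqP eq_y; subst y; case: (unliftP last2 x) Nxy => [i ->|->].
  by rewrite ltn_emb2 last_ltF.
by rewrite graft_last_last.
Qed.

Lemma graft_origin : [exists i, exists j, is_origin i j && N i j] =
                     [exists i, exists j, is_origin i j && M i j].
Proof.
rewrite exists_ord_lift; under eq_existsb => x do rewrite exists_ord_lift is_origin_lastr orbF.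
have -> : [exists y, is_origin last2 y && N last2 y] = false by apply/existsP => -[].
rewrite orbF; apply: eq_existsb => i; apply: eq_existsb => j.
by rewrite is_origin_emb graft_emb.
Qed.

Hypothesis M_last_row : forall j, M last1 j = (j == c).

Lemma graft_vertex : M last1 c.
Proof. by rewrite M_last_row eqxx. Qed.

Lemma has_above_graft_below : has_above N last2 (emb c).
Proof.
rewrite /has_above exists_ord_lift; apply/orP; left; apply/existsP; exists last1.
by rewrite emb_lt_last graft_emb graft_vertex.
Qed.

Lemma has_left_graft_right : has_left N (emb last1) last2.
Proof.
rewrite /has_left exists_ord_lift; apply/orP; left; apply/existsP; exists c.
by rewrite emb_lt_last graft_emb graft_vertex.
Qed.

Lemma is_parent_graft_below a b :
  is_parent N (emb a, emb b) (last2, emb c) = (a == last1) && (b == c).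
Proof.
rewrite /is_parent graft_emb graft_last_emb eqxx is_origin_lastl has_above_graft_below.
rewrite eq_emb2 emb_lt_last forall_ord_lift ltnn andbF andbT /=.
have -> : [forall x : 'I_m.+1, ((emb a < emb x) && (emb x < last2)) ==> ~~ N (emb x) (emb c)]
        = [forall x : 'I_m.+1, (a < x) ==> ~~ M x c].
  by apply: eq_forallb => x; rewrite ltn_emb2 emb_lt_last andbT graft_emb.
case: (eqVneq b c) => [->|]; last by rewrite !andbF.
case: (eqVneq a last1) => [->|neq_a] /=.
  by rewrite graft_vertex; apply/forallP => x; rewrite last_ltF.
apply/negbTE; rewrite negb_and; apply/orP; right.
apply/forallPn; exists last1; rewrite graft_vertex implybF negbK.
by rewrite ltn_neqAle leq_ord andbT; apply: contra neq_a => /eqP /val_inj ->.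
Qed.

Lemma is_parent_graft_right a b :
  is_parent N (emb a, emb b) (emb last1, last2) = (a == last1) && (b == c).
Proof.
rewrite /is_parent graft_emb graft_emb_last eqxx is_origin_lastr has_above_graft_rightF.
rewrite eq_emb2 emb_lt_last forall_ord_lift ltnn andbF andbT /=.
have -> : [forall y : 'I_m.+1,
            ((emb b < emb y) && (emb y < last2)) ==> ~~ N (emb last1) (emb y)]
        = [forall y : 'I_m.+1, (b < y) ==> (y != c)].
  by apply: eq_forallb => y; rewrite ltn_emb2 emb_lt_last andbT graft_emb M_last_row.
case: (eqVneq a last1) => [->|]; last by rewrite !andbF.
rewrite M_last_row /=; case: (eqVneq b c) => [->|] //=.
by apply/forallP => y; apply/implyP => lt_cy; apply: contraTneq lt_cy => ->; rewrite ltnn.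
Qed.

Lemma nchildren_graft a b : nchildren N (emb a, emb b) =
  nchildren M (a, b) + ((a == last1) && (b == c)).*2.
Proof.
rewrite -addnn addnA !nchildrenE sum_ord_lift.
under eq_bigr => x _ do rewrite sum_ord_lift.
rewrite sum_ord_lift big_split; congr (_ + _ + _).
- by apply: eq_bigr => x _; apply: eq_bigr => y _; rewrite is_parent_graft.
- rewrite -[RHS](sum_pred1_and last1); apply: eq_bigr => x _.
  case: (eqVneq x last1) => [->|neq_x]; first by rewrite is_parent_graft_right.
  by rewrite is_parent_childF // graft_emb_last neq_x.
- rewrite is_parent_childF ?graft_last_last // addn0.
  rewrite -[RHS](sum_pred1_and c); apply: eq_bigr => y _.
  case: (eqVneq y c) => [->|neq_y]; first by rewrite is_parent_graft_below.
  by rewrite is_parent_childF // graft_last_emb neq_y.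
Qed.

Lemma graft_rows : [forall i, exists j, N i j] = [forall i, exists j, M i j].
Proof.
rewrite forall_ord_lift exists_ord_lift graft_last_last orbF.
have -> : [exists j, N last2 (emb j)] by apply/existsP; exists c; rewrite graft_last_emb.
rewrite andbT; apply: eq_forallb => i; rewrite exists_ord_lift graft_emb_last.
under eq_existsb => j do rewrite graft_emb.
case: (eqVneq i last1) => [->|_]; rewrite ?orbF // orbT.
by symmetry; apply/existsP; exists c; apply: graft_vertex.
Qed.

Lemma graft_cols : [forall j, exists i, N i j] = [forall j, exists i, M i j].
Proof.
rewrite forall_ord_lift exists_ord_lift graft_last_last orbF.
have -> : [exists i, N (emb i) last2] by apply/existsP; exists last1; rewrite graft_emb_last.
rewrite andbT; apply: eq_forallb => j; rewrite exists_ord_lift graft_last_emb.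
under eq_existsb => i do rewrite graft_emb.
case: (eqVneq j c) => [->|_]; rewrite ?orbF // orbT.
by symmetry; apply/existsP; exists last1; apply: graft_vertex.
Qed.

Lemma axis_xor_graft : axis_xor N = axis_xor M.
Proof.
have last_row_xor : [forall y, axis_xor_at N last2 y].
  rewrite forall_ord_lift /axis_xor_at graft_last_last andbT; apply/forallP => j.
  rewrite graft_last_emb; case: eqVneq => [->|] //=.
  by rewrite has_above_graft_below has_left_graft_belowF.
have last_col_xor i : axis_xor_at N (emb i) last2.
  rewrite /axis_xor_at graft_emb_last; case: eqVneq => [->|] //=.
  by rewrite is_origin_lastr has_above_graft_rightF has_left_graft_right.
rewrite /axis_xor forall_ord_lift last_row_xor andbT; apply: eq_forallb => i.
rewrite forall_ord_lift last_col_xor andbT; apply: eq_forallb => j.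
by rewrite /axis_xor_at graft_emb is_origin_emb has_above_graft has_left_graft.
Qed.

Lemma binary_at_graft i j : binary_at N (emb i) (emb j) =
  if (i == last1) && (j == c) then nchildren M (last1, c) == 0 else binary_at M i j.
Proof.
rewrite /binary_at graft_emb nchildren_graft.
case: ifP => [/andP [/eqP -> /eqP ->]|_]; last by rewrite !addn0.
by rewrite graft_vertex addn2.
Qed.

Lemma binary_graft : binary N = binary M && (nchildren M (last1, c) == 0).
Proof.
have last_row_binary : [forall y, binary_at N last2 y].
  rewrite forall_ord_lift /binary_at graft_last_last andbT; apply/forallP => j.
  by rewrite graft_last_emb; case: eqVneq => [->|] //=; rewrite nchildren_graft_below.
have last_col_binary i : binary_at N (emb i) last2.
  rewrite /binary_at graft_emb_last; case: eqVneq => [->|] //=.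
  by rewrite nchildren_graft_right.
rewrite /binary forall_ord_lift last_row_binary andbT.
under eq_forallb => i do rewrite forall_ord_lift last_col_binary andbT.
apply/forallP/andP => [binN | [/forallP binM leafc] i].
  have leafc := forallP (binN last1) c; rewrite binary_at_graft !eqxx /= in leafc.
  split=> //; apply/forallP => i; apply/forallP => j.
  have := forallP (binN i) j; rewrite binary_at_graft.
  by case: ifP => [/andP [/eqP -> /eqP ->] _|//]; rewrite /binary_at leafc implybT.
by apply/forallP => j; rewrite binary_at_graft; case: ifP => // _; apply: (forallP (binM i)).
Qed.

Lemma is_CNM_graft : is_CNM N = is_CNM M && (nchildren M (last1, c) == 0).
Proof.
rewrite /is_CNM graft_origin graft_rows graft_cols.
have := axis_xor_graft; rewrite /axis_xor /axis_xor_at => ->.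
have := binary_graft; rewrite /binary /binary_at => ->.
by rewrite !andbA.
Qed.

End GraftVertex.

Definition clear_last_row (A : 'M[bool]_m.+1) : 'M[bool]_m.+1 :=
  \matrix_(i, j) ((i != last1) && A i j).

Lemma leaf_matrix_graft c (M : 'M[bool]_m.+1) : (forall j, M last1 j = (j == c)) ->
  leaf_matrix (graft c M) = graft c (clear_last_row (leaf_matrix M)).
Proof.
move=> M_last_row; apply/matrixP => x y; rewrite mxE.
case: (unliftP last2 x) => [i ->|->]; case: (unliftP last2 y) => [j ->|->].
- rewrite !graft_emb !mxE (nchildren_graft M_last_row).
  case: (eqVneq i last1) => [->|_]; last by rewrite addn0.
  by rewrite M_last_row /=; case: eqVneq => [->|] //=; rewrite addn2.
- rewrite !graft_emb_last; case: eqVneq => [->|] //=.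
  by rewrite nchildren_graft_right.
- rewrite !graft_last_emb; case: eqVneq => [->|] //=.
  by rewrite nchildren_graft_below.
- by rewrite !graft_last_last.
Qed.

(* On permutations, grafting at [(last1, s last1)] sends [last1] to the new
   last index and the new last index to [s last1]. *)
Definition graft_perm (s : 'S_m.+1) : 'S_m.+2 :=
  (tperm (emb last1) last2 * lift_perm last2 last2 s)%g.

Section GraftPerm.
Variable s : 'S_m.+1.

Lemma graft_perm_emb i : i != last1 -> graft_perm s (emb i) = emb (s i).
Proof.
move=> neq_i; rewrite permM tpermD ?lift_perm_lift ?last_eq_embF //.
by rewrite eq_emb2 eq_sym.
Qed.

Lemma graft_perm_emb_last : graft_perm s (emb last1) = last2.
Proof. by rewrite permM tpermL lift_perm_id. Qed.

Lemma graft_perm_last : graft_perm s last2 = emb (s last1).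
Proof. by rewrite permM tpermR lift_perm_lift. Qed.

Lemma graft_permV_last : ((graft_perm s)^-1)%g last2 = emb last1.
Proof. by rewrite -{1}graft_perm_emb_last permK. Qed.

Lemma perm_bmx_graft :
  perm_bmx (graft_perm s) = graft (s last1) (clear_last_row (perm_bmx s)).
Proof.
apply/matrixP => x y; rewrite mxE.
case: (unliftP last2 x) => [i ->|->]; case: (unliftP last2 y) => [j ->|->].
- rewrite graft_emb !mxE; case: (eqVneq i last1) => [->|neq_i].
    by rewrite graft_perm_emb_last last_eq_embF.
  by rewrite graft_perm_emb // eq_emb2.
- rewrite graft_emb_last; case: (eqVneq i last1) => [->|neq_i].
    by rewrite graft_perm_emb_last eqxx.
  by rewrite graft_perm_emb // emb_eq_lastF.
- by rewrite graft_last_emb graft_perm_last eq_emb2 eq_sym.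
- by rewrite graft_last_last graft_perm_last emb_eq_lastF.
Qed.

Lemma leaf_matrix_graft_perm (M : 'M[bool]_m.+1) :
  (forall j, M last1 j = (j == s last1)) -> nchildren M (last1, s last1) = 0 ->
  leaf_matrix (graft (s last1) M) = perm_bmx (graft_perm s) <->
  leaf_matrix M = perm_bmx s.
Proof.
move=> M_last_row leaf_c; rewrite leaf_matrix_graft // perm_bmx_graft.
split=> [/graft_inj /matrixP eq_cleared | -> //]; apply/matrixP => i j.
case: (eqVneq i last1) => [->|neq_i]; last first.
  by have := eq_cleared i j; rewrite !mxE neq_i.
rewrite !mxE M_last_row eq_sym.
by case: (eqVneq (s last1) j) => [<-|//]; rewrite leaf_c.
Qed.

End GraftPerm.

Lemma graft_perm_inj : injective graft_perm.
Proof.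
move=> s t eq_st; apply/permP => i; apply: (@lift_inj _ last2).
case: (eqVneq i last1) => [->|neq_i]; first by rewrite -!graft_perm_last eq_st.
by rewrite -!graft_perm_emb // eq_st.
Qed.

Section Ungraft.
Variables (s : 'S_m.+1) (N : 'M[bool]_m.+2).
Hypotheses (CN : is_CNM N) (LN : leaf_matrix N = perm_bmx (graft_perm s)).

Lemma CNM_graft_perm_last_row y : N last2 y = (emb (s last1) == y).
Proof. by rewrite (CNM_last_row CN LN) graft_perm_last. Qed.

Lemma CNM_graft_perm_last_col x : N x last2 = (emb last1 == x).
Proof. by rewrite (CNM_last_col CN LN) graft_permV_last. Qed.

(* A vertex [(last1, j)] of [N] is not a leaf, so it has a child below it, in
   the last row. *)
Lemma CNM_graft_perm_vertex j : N (emb last1) (emb j) -> j = s last1.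
Proof.
move=> Nj; case/and5P: CN => _ _ _ _ /forallP /(_ (emb last1)) /forallP /(_ (emb j)).
rewrite Nj /= => /orP [/eqP leaf_j | /eqP /nchildren2_below [[a b] /andP [Pab A]]].
  move/matrixP: LN => /(_ (emb last1) (emb j)).
  by rewrite !mxE Nj leaf_j graft_perm_emb_last last_eq_embF.
move: A => /= A; case/and4P: Pab => _ Nab _; rewrite A => /and3P [/eqP eq_b lt_a _].
case: (unliftP last2 a) Nab lt_a => [i ->|->] Nab lt_a.
  by rewrite ltn_emb2 last_ltF in lt_a.
by move: Nab; rewrite -eq_b CNM_graft_perm_last_row eq_emb2 => /eqP.
Qed.

Lemma CNM_graft_perm_row j : N (emb last1) (emb j) = (j == s last1).
Proof.
apply/idP/eqP => [/CNM_graft_perm_vertex // | ->].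
have := forallP (forallP (CNM_axis_xor CN) (emb last1)) last2.
rewrite /axis_xor_at CNM_graft_perm_last_col eqxx is_origin_lastr /=.
have -> : has_above N (emb last1) last2 = false.
  apply/existsP => -[x /andP [lt_x]]; rewrite CNM_graft_perm_last_col => /eqP eq_x.
  by rewrite eq_x ltnn in lt_x.
case/existsP => y /andP [lt_y Ny]; case: (unliftP last2 y) lt_y Ny => [i ->|->] lt_y Ny.
  by rewrite -(CNM_graft_perm_vertex Ny).
by rewrite ltnn in lt_y.
Qed.

Lemma CNM_graft_perm_ungraftK : graft (s last1) (ungraft N) = N.
Proof. exact: ungraftK CNM_graft_perm_last_row CNM_graft_perm_last_col. Qed.

End Ungraft.

Lemma num_CNM_with_leaves_graft (s : 'S_m.+1) :
  num_CNM_with_leaves (graft_perm s) = num_CNM_with_leaves s.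
Proof.
rewrite /num_CNM_with_leaves -[RHS](card_imset _ (@graft_inj (s last1))).
congr #|pred_of_set _|; apply/setP => N; rewrite inE; apply/idP/imsetP.
- case/andP => CN /eqP LN; exists (ungraft N); last by rewrite (CNM_graft_perm_ungraftK CN LN).
  have row_last j : ungraft N last1 j = (j == s last1).
    by rewrite mxE (CNM_graft_perm_row CN LN).
  have := CN; rewrite -{1}(CNM_graft_perm_ungraftK CN LN) (is_CNM_graft row_last).
  case/andP => CM /eqP leaf_c; rewrite inE CM /=; apply/eqP.
  by apply/(leaf_matrix_graft_perm row_last leaf_c); rewrite (CNM_graft_perm_ungraftK CN LN).
- case=> M; rewrite inE => /andP [CM /eqP LM] ->.
  have row_last j : M last1 j = (j == s last1) by rewrite (CNM_last_row CM LM) eq_sym.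
  have leaf_c : nchildren M (last1, s last1) = 0.
    by move/matrixP: LM => /(_ last1 (s last1)); rewrite !mxE eqxx => /andP [_ /eqP].
  rewrite (is_CNM_graft row_last) CM leaf_c /=; apply/eqP.
  exact/(leaf_matrix_graft_perm row_last leaf_c).
Qed.

End Graft.

Lemma leq_double_card_inj (T U : finType) (A : {set T}) (C : {set U}) (f g : T -> U) :
  injective f -> injective g -> {in A &, forall x y, f x != g y} ->
  {in A, forall x, (f x \in C) && (g x \in C)} -> 2 * #|A| <= #|C|.
Proof.
move=> f_inj g_inj neq_fg fgC.
have disj : f @: A :&: g @: A = set0.
  apply/setP => u; rewrite !inE; apply/andP => -[/imsetP [x xA ->] /imsetP [y yA]].
  by apply/eqP; apply: neq_fg.
have card_fgA : #|f @: A :|: g @: A| = #|A| + #|A|.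
  by rewrite cardsU disj cards0 subn0 !card_imset.
rewrite mul2n -addnn -card_fgA; apply/subset_leq_card/subsetP => u.
by rewrite inE => /orP [] /imsetP [x /fgC /andP [fxC gxC] ->].
Qed.

Theorem theorem5p1 (n k : nat) : 2 <= n -> 1 <= k -> 2 * b n k <= b n.+1 k.
Proof.
case: n => [|[|m]] // _ k_gt0.
pose graft_permV (s : 'S_m.+2) := ((graft_perm (s^-1)%g)^-1)%g.
have graft_permV_inj : injective graft_permV.
  by move=> s t /invg_inj /graft_perm_inj /invg_inj.
apply: (leq_double_card_inj (@graft_perm_inj m.+1) graft_permV_inj) => [s t | s].
- rewrite !inE => /eqP num_s _; apply/eqP => /(congr1 (fun p : 'S_m.+3 => p ord_max)).
  rewrite graft_perm_last graft_permV_last => /lift_inj s_last.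
  by have := @CNM_perm_last_neq m s; rewrite num_s k_gt0 s_last eqxx => /(_ isT).
- rewrite !inE => /eqP num_s.
  rewrite /graft_permV num_CNM_with_leavesV !num_CNM_with_leaves_graft.
  by rewrite num_CNM_with_leavesV num_s eqxx.
Qed.
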